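(* Let $\mathcal{H}=(\mathbb{C}^3)^{\otimes 3}$ with computational basis $|abc\rangle=|a\rangle\otimes|b\rangle\otimes|c\rangle$, $a,b,c\in\{0,1,2\}$. Let $E_3=\mathrm{diag}(1,-1,0)$, $\mathcal{L}oc=\{\, i(L\otimes \mathbf{1}\otimes \mathbf{1}+\mathbf{1}\otimes L\otimes \mathbf{1}+\mathbf{1}\otimes\mathbf{1}\otimes L) : L \text{ traceless Hermitian } 3\times 3\,\}$, $H=E_3\otimes E_3\otimes \mathbf{1}+E_3\otimes \mathbf{1}\otimes E_3+\mathbf{1}\otimes E_3\otimes E_3$, and let $\mathcal{L}$ be the real Lie algebra generated by $\mathcal{L}oc$ and $iH$. Let $V$ be the $8$-dimensional subspace spanned by $2|001\rangle-|100\rangle-|010\rangle$, $-2|110\rangle+|101\rangle+|011\rangle$, $2|002\rangle-|200\rangle-|020\rangle$, $2|102\rangle+2|012\rangle-|120\rangle-|210\rangle-|201\rangle-|021\rangle$, $2|112\rangle-|121\rangle-|211\rangle$, $|021\rangle-|120\rangle+|201\rangle-|210\rangle$, $-2|220\rangle+|022\rangle+|202\rangle$, $|122\rangle+|212\rangle-2|221\rangle$ (a copy of the adjoint representation, highest weight $(2,1,0)$, of $su(3)$, invariant under $\mathcal L$). Then for every traceless skew-Hermitian operator $X$ on $V$ there exists $Y\in\mathcal L$ whose restriction to $V$ equals $X$; i.e., $\mathcal L$ restricted to $V$ contains all of $su(8)$. *)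

From HB Require Import structures.
From mathcomp Require Import all_boot all_order all_algebra.
From mathcomp Require Import reals.
From mathcomp Require Import complex mxtens.
Set Implicit Arguments. Unset Strict Implicit. Unset Printing Implicit Defensive.
Import Order.TTheory GRing.Theory Num.Theory.
Local Open Scope ring_scope.

Section Defs.
Variable R : realType.
Local Notation C := (R[i]).

Definition adjmx m n (A : 'M[C]_(m, n)) : 'M[C]_(n, m) := (map_mx Num.conj A)^T.

Definition I3 : 'M[C]_3 := 1%:M.
Definition E3 : 'M[C]_3 := diag_mx (\row_(i < 3) [:: 1; -1; 0]`_i).

(* L (x) 1 (x) 1 + 1 (x) L (x) 1 + 1 (x) 1 (x) L on (C^3)^{(x)3};
   tensmx uses the index ordering |abc> <-> (3a+b)*3+c *)
Definition loc_sum (L : 'M[C]_3) : 'M[C]_27 :=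
  L *t I3 *t I3 + I3 *t L *t I3 + I3 *t I3 *t L.

Definition Hint : 'M[C]_27 := E3 *t E3 *t I3 + E3 *t I3 *t E3 + I3 *t E3 *t E3.

Definition Loc (Y : 'M[C]_27) : Prop :=
  exists L : 'M[C]_3, adjmx L = L /\ \tr L = 0 /\ Y = 'i *: loc_sum L.

Definition gens (Y : 'M[C]_27) : Prop := Loc Y \/ Y = 'i *: Hint.

Inductive lie_gen (S : 'M[C]_27 -> Prop) : 'M[C]_27 -> Prop :=
| lie_base Y : S Y -> lie_gen S Y
| lie_add Y Z : lie_gen S Y -> lie_gen S Z -> lie_gen S (Y + Z)
| lie_scale (c : C) Y : c \is Num.real -> lie_gen S Y -> lie_gen S (c *: Y)
| lie_bracket Y Z : lie_gen S Y -> lie_gen S Z -> lie_gen S (Y *m Z - Z *m Y).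

Definition Lalg : 'M[C]_27 -> Prop := lie_gen gens.

Definition e3 (a : 'I_3) : 'cV[C]_3 := delta_mx a 0.
Definition ket (a b c : 'I_3) : 'cV[C]_27 := e3 a *t e3 b *t e3 c.
Definition k (a b c : nat) : 'cV[C]_27 := ket (inord a) (inord b) (inord c).

Definition Vlist : seq 'cV[C]_27 := [::
  2 *: k 0 0 1 - k 1 0 0 - k 0 1 0;
  - (2 *: k 1 1 0) + k 1 0 1 + k 0 1 1;
  2 *: k 0 0 2 - k 2 0 0 - k 0 2 0;
  2 *: k 1 0 2 + 2 *: k 0 1 2 - k 1 2 0 - k 2 1 0 - k 2 0 1 - k 0 2 1;
  2 *: k 1 1 2 - k 1 2 1 - k 2 1 1;
  k 0 2 1 - k 1 2 0 + k 2 0 1 - k 2 1 0;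
  - (2 *: k 2 2 0) + k 0 2 2 + k 2 0 2;
  k 1 2 2 + k 2 1 2 - 2 *: k 2 2 1 ].

Definition Vrows : 'M[C]_(8, 27) := \matrix_(i < 8, j < 27) (Vlist`_i) j 0.

Definition inV (v : 'cV[C]_27) : Prop := (v^T <= Vrows)%MS.

Definition orthV (w : 'cV[C]_27) : Prop :=
  forall v, inV v -> adjmx v *m w = 0.

End Defs.

From Stdlib Require Import ZArith.
From mathcomp Require Import all_boot all_order all_algebra.
From mathcomp Require Import reals.
From mathcomp Require Import complex mxtens.
From mathcomp Require Import ssrZ zify.
Import ssrZ.Instances.
Import Order.TTheory GRing.Theory Num.Theory.
Local Open Scope ring_scope.

(* The eight vectors spanning V are pairwise orthogonal; let W be the 27 x 8 matrix having
   them as columns, with Gram matrix G = W^* W diagonal.  An operator Y preserving V acts on it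
   through the 8 x 8 matrix M with Y W = W M, and Y |-> M is a morphism of real Lie algebras.
   For X skew-Hermitian preserving V, M = G^-1 W^* X W lies in G^-1 u(8), so it suffices that
   the restrictions of elements of L span G^-1 u(8).  This is certified by exact computation
   over the Gaussian integers: the restrictions of the nine generators are computed, and each
   of the matrices G^-1 (E_ab - E_ba), G^-1 i (E_ab + E_ba), which span G^-1 u(8) over R,
   times a common denominator is an explicit integer combination of 64 iterated brackets of
   these restrictions. *)

Section SkewHermitian.
Variable R : realType.
Local Notation C := R[i].

Lemma adjmx_mul m n p (A : 'M[C]_(m, n)) (B : 'M[C]_(n, p)) :
  adjmx (A *m B) = adjmx B *m adjmx A.
Proof. by rewrite /adjmx map_mxM trmx_mul. Qed.

Lemma adjmxK m n (A : 'M[C]_(m, n)) : adjmx (adjmx A) = A.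
Proof. by apply/matrixP => i j; rewrite !mxE conjCK. Qed.

Lemma sum_delta_mx_swap n (f g : 'I_n -> 'I_n -> C) :
  \sum_(a < n) \sum_(b < n) (f a b *: delta_mx a b + g a b *: delta_mx b a)
  = \sum_(a < n) \sum_(b < n) (f a b + g b a) *: (delta_mx a b : 'M_n).
Proof.
under eq_bigr do rewrite big_split /=.
rewrite big_split /= [X in _ + X]exchange_big -big_split /=.
by apply: eq_bigr => a _; rewrite -big_split; apply: eq_bigr => b _; rewrite scalerDl.
Qed.

Lemma skew_hermitian_sum_delta n (x : 'M[C]_n) : adjmx x = - x ->
  x = \sum_(a < n) \sum_(b < n)
        ((complex.Re (x a b) / 2)%:C%C *: (delta_mx a b - delta_mx b a)
         + (complex.Im (x a b) / 2)%:C%C *: ('i *: (delta_mx a b + delta_mx b a))).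
Proof.
move=> skew_x; set re := fun a b => (complex.Re (x a b) / 2)%:C%C.
set im := fun a b => (complex.Im (x a b) / 2)%:C%C.
transitivity (\sum_(a < n) \sum_(b < n)
  ((re a b + im a b * 'i) *: delta_mx a b + (- re a b + im a b * 'i) *: delta_mx b a)).
  rewrite sum_delta_mx_swap {1}[x]matrix_sum_delta.
  apply: eq_bigr => a _; apply: eq_bigr => b _; congr (_ *: _).
  have /= := congr1 (fun A : 'M[C]_n => A b a) skew_x; rewrite !mxE => conj_x.
  rewrite /re /im -[x b a]opprK -conj_x; case: (x a b) => p q; simpc.
  by rewrite /= -!splitr.
apply: eq_bigr => a _; apply: eq_bigr => b _.
by rewrite !scalerDl scaleNr scalerBr !scalerDr !scalerA addrACA.
Qed.

End SkewHermitian.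

Section GaussianIntegerMatrices.
Local Open Scope Z_scope.

Definition gint := (Z * Z)%type.
Definition gi0 : gint := (0, 0).
Definition gi1 : gint := (1, 0).
Definition gi_add (x y : gint) : gint := (x.1 + y.1, x.2 + y.2).
Definition gi_opp (x : gint) : gint := (- x.1, - x.2).
Definition gi_mul (x y : gint) : gint :=
  (x.1 * y.1 - x.2 * y.2, x.1 * y.2 + x.2 * y.1).
Definition gi_conj (x : gint) : gint := (x.1, - x.2).
Definition gi_sum (s : seq gint) : gint := foldr gi_add gi0 s.

Definition gmx := seq (seq gint).
Definition gmx_entry (A : gmx) (i j : nat) : gint := nth gi0 (nth [::] A i) j.
Definition gmx_mk m n (f : nat -> nat -> gint) : gmx :=
  mkseq (fun i => mkseq (f i) n) m.

Section GaussianMatrixOps.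
Variables m n p : nat.
Implicit Types A B : gmx.

Definition gmx_zero := gmx_mk m n (fun _ _ => gi0).
Definition gmx_add A B := gmx_mk m n (fun i j => gi_add (gmx_entry A i j) (gmx_entry B i j)).
Definition gmx_opp A := gmx_mk m n (fun i j => gi_opp (gmx_entry A i j)).
Definition gmx_scale (z : gint) A := gmx_mk m n (fun i j => gi_mul z (gmx_entry A i j)).
Definition gmx_adj A := gmx_mk n m (fun i j => gi_conj (gmx_entry A j i)).
Definition gmx_mul A B := gmx_mk m p (fun i j =>
  gi_sum (mkseq (fun k => gi_mul (gmx_entry A i k) (gmx_entry B k j)) n)).
Definition gmx_delta (a b : nat) :=
  gmx_mk m n (fun i j => if (i == a) && (j == b) then gi1 else gi0).
Definition gmx_diag (d : seq Z) :=
  gmx_mk m m (fun i j => if i == j then (nth 0 d i, 0) else gi0).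
Definition gmx_divZ (d : Z) A :=
  gmx_mk m n (fun i j => let x := gmx_entry A i j in (Z.div x.1 d, Z.div x.2 d)).

End GaussianMatrixOps.

Definition gmx_tens m1 n1 m2 n2 (A B : gmx) : gmx :=
  gmx_mk (m1 * m2) (n1 * n2) (fun i j =>
    gi_mul (gmx_entry A (i %/ m2) (j %/ n2)) (gmx_entry B (i %% m2) (j %% n2))).
Definition gmx_bracket n (A B : gmx) : gmx :=
  gmx_add n n (gmx_mul n n n A B) (gmx_opp n n (gmx_mul n n n B A)).
Definition gmx_tens3 (A B D : gmx) : gmx := gmx_tens 9 9 3 3 (gmx_tens 3 3 3 3 A B) D.

Definition gi_i2 : gint := (0, 2).
Definition gI3 : gmx := gmx_diag 3 [:: 1; 1; 1].
Definition gE3 : gmx := gmx_diag 3 [:: 1; -1; 0].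

Definition gsu3_diag a b : gmx :=
  gmx_add 3 3 (gmx_delta 3 3 a a) (gmx_opp 3 3 (gmx_delta 3 3 b b)).
Definition gsu3_sym a b : gmx := gmx_add 3 3 (gmx_delta 3 3 a b) (gmx_delta 3 3 b a).
Definition gsu3_asym a b : gmx :=
  gmx_add 3 3 (gmx_scale 3 3 (0, -1) (gmx_delta 3 3 a b))
              (gmx_scale 3 3 (0, 1) (gmx_delta 3 3 b a)).
Definition su3_basis : seq gmx := [::
  gsu3_diag 0 1; gsu3_diag 1 2; gsu3_sym 0 1; gsu3_asym 0 1;
  gsu3_sym 0 2; gsu3_asym 0 2; gsu3_sym 1 2; gsu3_asym 1 2].

Definition gloc (L : gmx) : gmx :=
  gmx_add 27 27 (gmx_add 27 27 (gmx_tens3 L gI3 gI3) (gmx_tens3 gI3 L gI3))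
                (gmx_tens3 gI3 gI3 L).
Definition gH : gmx :=
  gmx_add 27 27 (gmx_add 27 27 (gmx_tens3 gE3 gE3 gI3) (gmx_tens3 gE3 gI3 gE3))
                (gmx_tens3 gI3 gE3 gE3).
(* i L and i H, doubled so that their restrictions to V have Gaussian-integer matrices. *)
Definition ggens : seq gmx :=
  rcons [seq gmx_scale 27 27 gi_i2 (gloc L) | L <- su3_basis] (gmx_scale 27 27 gi_i2 gH).

Definition gket a b c : gmx :=
  gmx_tens 9 1 3 1 (gmx_tens 3 1 3 1 (gmx_delta 3 1 a 0) (gmx_delta 3 1 b 0))
                   (gmx_delta 3 1 c 0).

Declare Scope gvec_scope.
Delimit Scope gvec_scope with gv.
Local Notation "x + y" := (gmx_add 27 1 x y) : gvec_scope.
Local Notation "x - y" := (gmx_add 27 1 x (gmx_opp 27 1 y)) : gvec_scope.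
Local Notation "- x" := (gmx_opp 27 1 x) : gvec_scope.
Local Notation "c *: x" := (gmx_scale 27 1 (c, 0) x) : gvec_scope.
Definition gV : seq gmx := [::
  (2 *: gket 0 0 1 - gket 1 0 0 - gket 0 1 0)%gv;
  (- (2 *: gket 1 1 0) + gket 1 0 1 + gket 0 1 1)%gv;
  (2 *: gket 0 0 2 - gket 2 0 0 - gket 0 2 0)%gv;
  (2 *: gket 1 0 2 + 2 *: gket 0 1 2 - gket 1 2 0 - gket 2 1 0 - gket 2 0 1 - gket 0 2 1)%gv;
  (2 *: gket 1 1 2 - gket 1 2 1 - gket 2 1 1)%gv;
  (gket 0 2 1 - gket 1 2 0 + gket 2 0 1 - gket 2 1 0)%gv;
  (- (2 *: gket 2 2 0) + gket 0 2 2 + gket 2 0 2)%gv;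
  (gket 1 2 2 + gket 2 1 2 - 2 *: gket 2 2 1)%gv].

Definition gW : gmx := gmx_mk 27 8 (fun j i => gmx_entry (nth [::] gV i) j 0).
Definition gram_scale : Z := 12.
(* gram_scale times the inverse of the Gram matrix W^* W = diag(6,6,6,12,6,4,6,6). *)
Definition gD : gmx := gmx_diag 8 [:: 2; 2; 2; 1; 2; 3; 2; 2].

Definition grestr (G : gmx) : gmx :=
  gmx_divZ 8 8 gram_scale
    (gmx_mul 8 8 8 gD (gmx_mul 8 27 8 (gmx_adj 27 8 gW) (gmx_mul 27 27 8 G gW))).

Fixpoint gbracket_word (g : seq gmx) (w : seq nat) : gmx :=
  match w with
  | [::] => [::]
  | [:: i] => nth [::] g i
  | i :: w' => gmx_bracket 8 (nth [::] g i) (gbracket_word g w')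
  end.

Definition words : seq (seq nat) := ([::
  [:: 0]; [:: 1]; [:: 2]; [:: 3]; [:: 4]; [:: 5]; [:: 6]; [:: 7]; [:: 8];
  [:: 8; 2]; [:: 8; 3]; [:: 8; 4]; [:: 8; 5]; [:: 8; 6]; [:: 8; 7];
  [:: 2; 8; 2]; [:: 3; 8; 2]; [:: 4; 8; 2]; [:: 5; 8; 2]; [:: 6; 8; 2];
  [:: 7; 8; 2]; [:: 8; 8; 2]; [:: 3; 8; 3]; [:: 4; 8; 3]; [:: 5; 8; 3];
  [:: 6; 8; 3]; [:: 7; 8; 3]; [:: 8; 8; 3]; [:: 4; 8; 4]; [:: 5; 8; 4];
  [:: 6; 8; 4]; [:: 7; 8; 4]; [:: 8; 8; 4]; [:: 5; 8; 5]; [:: 6; 8; 5];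
  [:: 7; 8; 5]; [:: 8; 8; 5]; [:: 6; 8; 6]; [:: 7; 8; 6]; [:: 8; 8; 6];
  [:: 7; 8; 7]; [:: 8; 8; 7]; [:: 4; 4; 8; 2]; [:: 7; 4; 8; 2];
  [:: 8; 4; 8; 2]; [:: 8; 5; 8; 2]; [:: 8; 6; 8; 2]; [:: 8; 7; 8; 2];
  [:: 3; 8; 8; 2]; [:: 4; 8; 8; 2]; [:: 5; 8; 8; 2]; [:: 6; 8; 8; 2];
  [:: 7; 8; 8; 2]; [:: 4; 4; 8; 3]; [:: 4; 4; 8; 4]; [:: 5; 4; 8; 4];
  [:: 6; 4; 8; 4]; [:: 7; 4; 8; 4]; [:: 8; 6; 8; 4]; [:: 8; 7; 8; 4];
  [:: 6; 8; 8; 4]; [:: 7; 8; 8; 4]; [:: 7; 8; 4; 8; 2]; [:: 4; 4; 4; 8; 4]])%N.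

Definition gcomb (B : seq gmx) (l : seq (Z * nat)) : gmx :=
  foldr (fun ck acc => gmx_add 8 8 (gmx_scale 8 8 (ck.1, 0) (nth [::] B ck.2)) acc)
        (gmx_zero 8 8) l.

Definition gtarget_asym a b : gmx :=
  gmx_mul 8 8 8 gD (gmx_add 8 8 (gmx_delta 8 8 a b) (gmx_opp 8 8 (gmx_delta 8 8 b a))).
Definition gtarget_sym a b : gmx :=
  gmx_mul 8 8 8 gD
    (gmx_scale 8 8 (0, 1) (gmx_add 8 8 (gmx_delta 8 8 a b) (gmx_delta 8 8 b a))).

Definition coef_denom : Z := 6912.

(* Row 8a+b lists (coefficient, index in words) pairs, found offline by exact linear algebra
   over Q. *)
Definition asym_coefs : seq (seq (Z * nat)) := [::
  [:: ];
  [:: (4608, 3%N); (1152, 9%N); (216, 27%N); (-576, 31%N); (72, 42%N)];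
  [:: (-1152, 7%N); (-288, 13%N); (144, 23%N); (-432, 41%N); (-72, 56%N)];
  [:: (576, 5%N); (-768, 11%N); (-108, 25%N); (-108, 46%N); (81, 51%N); (-12, 54%N)];
  [:: (864, 13%N); (-216, 23%N); (432, 41%N); (-216, 44%N); (54, 49%N)];
  [:: (4032, 5%N); (1248, 11%N); (-108, 25%N); (432, 36%N); (-108, 46%N); (81, 51%N); (60, 54%N)];
  [:: (-432, 9%N); (108, 27%N); (-216, 31%N); (-648, 34%N); (-216, 58%N); (216, 60%N)];
  [:: (-864, 29%N)];
  [:: (-4608, 3%N); (-1152, 9%N); (-216, 27%N); (576, 31%N); (-72, 42%N)];
  [:: ];
  [:: (-864, 11%N); (-216, 25%N); (-432, 36%N); (216, 46%N); (-54, 51%N)];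
  [:: (-576, 7%N); (288, 13%N); (-36, 23%N); (108, 44%N); (-81, 49%N); (-36, 56%N)];
  [:: (1152, 5%N); (-672, 11%N); (432, 36%N); (-24, 54%N)];
  [:: (4032, 7%N); (-1152, 13%N); (468, 23%N); (432, 41%N); (-108, 44%N); (81, 49%N); (-180, 56%N)];
  [:: (864, 38%N)];
  [:: (-432, 9%N); (108, 27%N); (648, 31%N); (216, 34%N); (-216, 58%N); (216, 60%N)];
  [:: (1152, 7%N); (288, 13%N); (-144, 23%N); (432, 41%N); (72, 56%N)];
  [:: (864, 11%N); (216, 25%N); (432, 36%N); (-216, 46%N); (54, 51%N)];
  [:: ];
  [:: (-432, 9%N); (-108, 27%N)];
  [:: (216, 16%N)];
  [:: (1152, 3%N); (-144, 9%N); (216, 27%N); (72, 31%N); (648, 34%N); (-36, 42%N); (-216, 58%N)];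
  [:: (1152, 5%N); (-2400, 11%N); (-432, 36%N); (-24, 54%N)];
  [:: (864, 13%N); (432, 18%N); (216, 23%N); (432, 41%N); (-216, 44%N); (54, 49%N)];
  [:: (-576, 5%N); (768, 11%N); (108, 25%N); (108, 46%N); (-81, 51%N); (12, 54%N)];
  [:: (576, 7%N); (-288, 13%N); (36, 23%N); (-108, 44%N); (81, 49%N); (36, 56%N)];
  [:: (432, 9%N); (108, 27%N)];
  [:: ];
  [:: (432, 9%N); (-108, 27%N)];
  [:: (108, 16%N); (-432, 29%N); (-432, 38%N); (-108, 62%N)];
  [:: (576, 7%N); (-288, 13%N); (-216, 18%N); (36, 23%N); (108, 44%N); (-81, 49%N); (36, 56%N)];
  [:: (576, 5%N); (-768, 11%N); (-216, 20%N); (-108, 25%N); (108, 46%N); (-81, 51%N); (-12, 54%N)];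
  [:: (-864, 13%N); (216, 23%N); (-432, 41%N); (216, 44%N); (-54, 49%N)];
  [:: (-1152, 5%N); (672, 11%N); (-432, 36%N); (24, 54%N)];
  [:: (-216, 16%N)];
  [:: (-432, 9%N); (108, 27%N)];
  [:: ];
  [:: (1152, 3%N); (720, 9%N); (-216, 27%N); (-360, 31%N); (216, 34%N); (-36, 42%N); (216, 58%N)];
  [:: (864, 11%N); (432, 20%N); (-216, 25%N); (432, 36%N); (-216, 46%N); (54, 51%N)];
  [:: (1152, 7%N); (-1440, 13%N); (-144, 23%N); (-432, 41%N); (72, 56%N)];
  [:: (-4032, 5%N); (-1248, 11%N); (108, 25%N); (-432, 36%N); (108, 46%N); (-81, 51%N); (-60, 54%N)];
  [:: (-4032, 7%N); (1152, 13%N); (-468, 23%N); (-432, 41%N); (108, 44%N); (-81, 49%N); (180, 56%N)];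
  [:: (-1152, 3%N); (144, 9%N); (-216, 27%N); (-72, 31%N); (-648, 34%N); (36, 42%N); (216, 58%N)];
  [:: (-108, 16%N); (432, 29%N); (432, 38%N); (108, 62%N)];
  [:: (-1152, 3%N); (-720, 9%N); (216, 27%N); (360, 31%N); (-216, 34%N); (36, 42%N); (-216, 58%N)];
  [:: ];
  [:: (2880, 7%N); (2880, 13%N); (216, 18%N); (-468, 23%N); (432, 41%N); (-108, 44%N); (81, 49%N); (180, 56%N)];
  [:: (-2880, 5%N); (-480, 11%N); (-216, 20%N); (-108, 25%N); (-432, 36%N); (108, 46%N); (-81, 51%N); (60, 54%N)];
  [:: (432, 9%N); (-108, 27%N); (216, 31%N); (648, 34%N); (216, 58%N); (-216, 60%N)];
  [:: (-864, 38%N)];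
  [:: (-1152, 5%N); (2400, 11%N); (432, 36%N); (24, 54%N)];
  [:: (-576, 7%N); (288, 13%N); (216, 18%N); (-36, 23%N); (-108, 44%N); (81, 49%N); (-36, 56%N)];
  [:: (-864, 11%N); (-432, 20%N); (216, 25%N); (-432, 36%N); (216, 46%N); (-54, 51%N)];
  [:: (-2880, 7%N); (-2880, 13%N); (-216, 18%N); (468, 23%N); (-432, 41%N); (108, 44%N); (-81, 49%N); (-180, 56%N)];
  [:: ];
  [:: (2304, 3%N); (-1152, 9%N); (216, 27%N); (576, 31%N); (-72, 42%N)];
  [:: (864, 29%N)];
  [:: (432, 9%N); (-108, 27%N); (-648, 31%N); (-216, 34%N); (216, 58%N); (-216, 60%N)];
  [:: (-864, 13%N); (-432, 18%N); (-216, 23%N); (-432, 41%N); (216, 44%N); (-54, 49%N)];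
  [:: (-576, 5%N); (768, 11%N); (216, 20%N); (108, 25%N); (-108, 46%N); (81, 51%N); (12, 54%N)];
  [:: (-1152, 7%N); (1440, 13%N); (144, 23%N); (432, 41%N); (-72, 56%N)];
  [:: (2880, 5%N); (480, 11%N); (216, 20%N); (108, 25%N); (432, 36%N); (-108, 46%N); (81, 51%N); (-60, 54%N)];
  [:: (-2304, 3%N); (1152, 9%N); (-216, 27%N); (-576, 31%N); (72, 42%N)];
  [:: ]].

Definition sym_coefs : seq (seq (Z * nat)) := [::
  [:: (5376, 0%N); (1536, 1%N); (-6912, 8%N); (-60, 15%N); (36, 22%N); (272, 28%N); (144, 33%N); (144, 37%N); (-240, 40%N); (96, 43%N); (54, 48%N); (-4, 63%N)];
  [:: (4608, 2%N); (-1152, 10%N); (216, 21%N); (576, 30%N); (-72, 53%N)];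
  [:: (-1152, 6%N); (288, 14%N); (-144, 17%N); (-432, 39%N); (72, 57%N)];
  [:: (576, 4%N); (1152, 12%N); (108, 26%N); (108, 47%N); (-81, 52%N); (36, 55%N)];
  [:: (-864, 14%N); (216, 24%N); (432, 39%N); (216, 45%N); (-54, 50%N)];
  [:: (4032, 4%N); (-3168, 12%N); (108, 26%N); (432, 32%N); (108, 47%N); (-81, 52%N); (-180, 55%N)];
  [:: (-432, 10%N); (-108, 21%N); (-216, 30%N); (648, 35%N); (216, 59%N); (-216, 61%N)];
  [:: (-432, 28%N); (432, 33%N)];
  [:: (4608, 2%N); (-1152, 10%N); (216, 21%N); (576, 30%N); (-72, 53%N)];
  [:: (-3840, 0%N); (1536, 1%N); (-6912, 8%N); (84, 15%N); (36, 22%N); (-304, 28%N); (144, 33%N); (144, 37%N); (336, 40%N); (-48, 43%N); (-54, 48%N); (-4, 63%N)];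
  [:: (864, 12%N); (216, 26%N); (-432, 32%N); (-216, 47%N); (54, 52%N)];
  [:: (-576, 6%N); (-288, 14%N); (-72, 17%N); (108, 24%N); (-108, 45%N); (81, 50%N); (36, 57%N)];
  [:: (1152, 4%N); (1440, 12%N); (432, 32%N); (72, 55%N)];
  [:: (4032, 6%N); (1152, 14%N); (-360, 17%N); (-108, 24%N); (432, 39%N); (108, 45%N); (-81, 50%N); (180, 57%N)];
  [:: (432, 37%N); (-432, 40%N)];
  [:: (-432, 10%N); (-108, 21%N); (648, 30%N); (-216, 35%N); (216, 59%N); (-216, 61%N)];
  [:: (-1152, 6%N); (288, 14%N); (-144, 17%N); (-432, 39%N); (72, 57%N)];
  [:: (864, 12%N); (216, 26%N); (-432, 32%N); (-216, 47%N); (54, 52%N)];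
  [:: (768, 0%N); (1536, 1%N); (-6912, 8%N); (84, 15%N); (36, 22%N); (464, 28%N); (144, 33%N); (144, 37%N); (336, 40%N); (-48, 43%N); (-54, 48%N); (8, 63%N)];
  [:: (432, 10%N); (-108, 21%N)];
  [:: (108, 15%N); (-108, 22%N)];
  [:: (1152, 2%N); (144, 10%N); (216, 21%N); (-72, 30%N); (648, 35%N); (36, 53%N); (-216, 59%N)];
  [:: (1152, 4%N); (3168, 12%N); (-432, 32%N); (72, 55%N)];
  [:: (-864, 14%N); (432, 17%N); (-216, 24%N); (432, 39%N); (216, 45%N); (-54, 50%N)];
  [:: (576, 4%N); (1152, 12%N); (108, 26%N); (108, 47%N); (-81, 52%N); (36, 55%N)];
  [:: (-576, 6%N); (-288, 14%N); (-72, 17%N); (108, 24%N); (-108, 45%N); (81, 50%N); (36, 57%N)];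
  [:: (432, 10%N); (-108, 21%N)];
  [:: (384, 0%N); (768, 1%N); (-3456, 8%N); (-12, 15%N); (-36, 22%N); (232, 28%N); (72, 33%N); (72, 37%N); (168, 40%N); (-24, 43%N); (4, 63%N)];
  [:: (-432, 10%N); (-108, 21%N)];
  [:: (-1152, 0%N); (180, 15%N); (-504, 28%N); (216, 33%N); (-216, 37%N); (504, 40%N); (-180, 43%N)];
  [:: (576, 6%N); (288, 14%N); (-144, 17%N); (-108, 24%N); (-108, 45%N); (81, 50%N); (-36, 57%N)];
  [:: (576, 4%N); (1152, 12%N); (-216, 19%N); (108, 26%N); (-108, 47%N); (81, 52%N); (36, 55%N)];
  [:: (-864, 14%N); (216, 24%N); (432, 39%N); (216, 45%N); (-54, 50%N)];
  [:: (1152, 4%N); (1440, 12%N); (432, 32%N); (72, 55%N)];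
  [:: (108, 15%N); (-108, 22%N)];
  [:: (-432, 10%N); (-108, 21%N)];
  [:: (768, 0%N); (1536, 1%N); (-6912, 8%N); (84, 15%N); (36, 22%N); (464, 28%N); (144, 33%N); (144, 37%N); (336, 40%N); (-48, 43%N); (54, 48%N); (8, 63%N)];
  [:: (-1152, 2%N); (720, 10%N); (216, 21%N); (-360, 30%N); (-216, 35%N); (-36, 53%N); (-216, 59%N)];
  [:: (-864, 12%N); (432, 19%N); (216, 26%N); (432, 32%N); (216, 47%N); (-54, 52%N)];
  [:: (1152, 6%N); (1440, 14%N); (144, 17%N); (-432, 39%N); (-72, 57%N)];
  [:: (4032, 4%N); (-3168, 12%N); (108, 26%N); (432, 32%N); (108, 47%N); (-81, 52%N); (-180, 55%N)];
  [:: (4032, 6%N); (1152, 14%N); (-360, 17%N); (-108, 24%N); (432, 39%N); (108, 45%N); (-81, 50%N); (180, 57%N)];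
  [:: (1152, 2%N); (144, 10%N); (216, 21%N); (-72, 30%N); (648, 35%N); (36, 53%N); (-216, 59%N)];
  [:: (-1152, 0%N); (180, 15%N); (-504, 28%N); (216, 33%N); (-216, 37%N); (504, 40%N); (-180, 43%N)];
  [:: (-1152, 2%N); (720, 10%N); (216, 21%N); (-360, 30%N); (-216, 35%N); (-36, 53%N); (-216, 59%N)];
  [:: (-1152, 0%N); (-2304, 1%N); (-10368, 8%N); (252, 15%N); (108, 22%N); (744, 28%N); (-216, 33%N); (-216, 37%N); (360, 40%N); (-144, 43%N); (24, 63%N)];
  [:: (2880, 6%N); (-2880, 14%N); (576, 17%N); (108, 24%N); (432, 39%N); (108, 45%N); (-81, 50%N); (-180, 57%N)];
  [:: (-2880, 4%N); (-1440, 12%N); (-216, 19%N); (108, 26%N); (-432, 32%N); (-108, 47%N); (81, 52%N); (-180, 55%N)];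
  [:: (-432, 10%N); (-108, 21%N); (-216, 30%N); (648, 35%N); (216, 59%N); (-216, 61%N)];
  [:: (432, 37%N); (-432, 40%N)];
  [:: (1152, 4%N); (3168, 12%N); (-432, 32%N); (72, 55%N)];
  [:: (576, 6%N); (288, 14%N); (-144, 17%N); (-108, 24%N); (-108, 45%N); (81, 50%N); (-36, 57%N)];
  [:: (-864, 12%N); (432, 19%N); (216, 26%N); (432, 32%N); (216, 47%N); (-54, 52%N)];
  [:: (2880, 6%N); (-2880, 14%N); (576, 17%N); (108, 24%N); (432, 39%N); (108, 45%N); (-81, 50%N); (-180, 57%N)];
  [:: (768, 0%N); (-3072, 1%N); (-6912, 8%N); (84, 15%N); (36, 22%N); (-304, 28%N); (144, 33%N); (144, 37%N); (336, 40%N); (-48, 43%N); (54, 48%N); (-4, 63%N)];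
  [:: (2304, 2%N); (1152, 10%N); (216, 21%N); (-576, 30%N); (72, 53%N)];
  [:: (-432, 28%N); (432, 33%N)];
  [:: (-432, 10%N); (-108, 21%N); (648, 30%N); (-216, 35%N); (216, 59%N); (-216, 61%N)];
  [:: (-864, 14%N); (432, 17%N); (-216, 24%N); (432, 39%N); (216, 45%N); (-54, 50%N)];
  [:: (576, 4%N); (1152, 12%N); (-216, 19%N); (108, 26%N); (-108, 47%N); (81, 52%N); (36, 55%N)];
  [:: (1152, 6%N); (1440, 14%N); (144, 17%N); (-432, 39%N); (-72, 57%N)];
  [:: (-2880, 4%N); (-1440, 12%N); (-216, 19%N); (108, 26%N); (-432, 32%N); (-108, 47%N); (81, 52%N); (-180, 55%N)];
  [:: (2304, 2%N); (1152, 10%N); (216, 21%N); (-576, 30%N); (72, 53%N)];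
  [:: (-3840, 0%N); (-3072, 1%N); (-6912, 8%N); (-60, 15%N); (36, 22%N); (272, 28%N); (144, 33%N); (144, 37%N); (-240, 40%N); (96, 43%N); (-54, 48%N); (-4, 63%N)]].


Definition su3_basis_check : bool :=
  all (fun L => (gmx_adj 3 3 L == L)
                && (gi_sum [:: gmx_entry L 0 0; gmx_entry L 1 1; gmx_entry L 2 2] == gi0))
      su3_basis.

Definition restrict_check : bool :=
  all (fun G => gmx_mul 27 27 8 G gW == gmx_mul 27 8 8 gW (grestr G)) ggens.

Definition gram_check : bool :=
  gmx_mul 8 8 8 gD (gmx_mul 8 27 8 (gmx_adj 27 8 gW) gW) == gmx_diag 8 (nseq 8 gram_scale).

Definition span_check (g : seq gmx) : bool :=
  let B := map (gbracket_word g) words in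
  all (fun ab =>
    let a := (ab %/ 8)%N in let b := (ab %% 8)%N in
    (gcomb B (nth [::] asym_coefs ab) == gmx_scale 8 8 (coef_denom, 0) (gtarget_asym a b))
    && (gcomb B (nth [::] sym_coefs ab) == gmx_scale 8 8 (coef_denom, 0) (gtarget_sym a b)))
  (iota 0 64).

End GaussianIntegerMatrices.

Lemma su3_basis_checked : su3_basis_check. Proof. by vm_compute. Qed.
Lemma gram_checked : gram_check. Proof. by vm_compute. Qed.
Lemma restrict_checked : restrict_check. Proof. by vm_compute. Qed.
Lemma span_checked : span_check (map grestr ggens). Proof. by vm_compute. Qed.

Section Embedding.
Variable R : realType.
Local Notation C := R[i].

Definition ZtoR (z : Z) : R := (int_of_Z z)%:~R.
Definition gC (x : gint) : C := Complex (ZtoR x.1) (ZtoR x.2).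
Definition gmxC m n (A : gmx) : 'M[C]_(m, n) := \matrix_(i, j) gC (gmx_entry A i j).

Lemma ZtoR_add a b : ZtoR (Z.add a b) = ZtoR a + ZtoR b.
Proof. by rewrite /ZtoR -intrD; congr intmul; exact: raddfD. Qed.

Lemma ZtoR_opp a : ZtoR (Z.opp a) = - ZtoR a.
Proof. by rewrite /ZtoR -mulrNz; congr intmul; exact: raddfN. Qed.

Lemma ZtoR_mul a b : ZtoR (Z.mul a b) = ZtoR a * ZtoR b.
Proof. by rewrite /ZtoR -intrM; congr intmul; exact: rmorphM. Qed.

Lemma ZtoR_eq0 a : (ZtoR a == 0) = (a == Z0).
Proof.
rewrite /ZtoR intr_eq0; apply/eqP/eqP => [a0 | ->] //.
by rewrite -[a]int_of_ZK a0.
Qed.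

Lemma gC_add x y : gC (gi_add x y) = gC x + gC y.
Proof. by rewrite /gC /= !ZtoR_add. Qed.

Lemma gC_opp x : gC (gi_opp x) = - gC x.
Proof. by rewrite /gC /= !ZtoR_opp. Qed.

Lemma gC_mul x y : gC (gi_mul x y) = gC x * gC y.
Proof. by rewrite /gC /= -Z.add_opp_r !ZtoR_add ZtoR_opp !ZtoR_mul. Qed.

Lemma gC_conj x : gC (gi_conj x) = (gC x)^*.
Proof. by rewrite /gC /= ZtoR_opp. Qed.

Lemma gC1 : gC gi1 = 1. Proof. by []. Qed.

Lemma gC_real z : gC (z, Z0) \is Num.real.
Proof. by rewrite /gC complex_real. Qed.

Lemma gC_imag z : gC (Z0, z) = gC (z, Z0) * 'i.
Proof. by rewrite /gC; simpc. Qed.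

Lemma gC_eq0 z : (gC (z, Z0) == 0) = (z == Z0).
Proof. by rewrite /gC eq_complex /= eqxx andbT ZtoR_eq0. Qed.

Lemma gC_sum n f : gC (gi_sum (mkseq f n)) = \sum_(k < n) gC (f k).
Proof.
rewrite -(big_mkord xpredT (gC \o f)) /index_iota subn0 /mkseq.
by elim: (iota 0 n) => [|a s IH]; rewrite ?big_nil ?big_cons //= gC_add IH.
Qed.

Lemma gmx_entry_mk m n f i j :
  (i < m)%N -> (j < n)%N -> gmx_entry (gmx_mk m n f) i j = f i j.
Proof. by move=> ltim ltjn; rewrite /gmx_entry /gmx_mk !nth_mkseq. Qed.

Lemma gmxC_mk m n f : gmxC m n (gmx_mk m n f) = \matrix_(i, j) gC (f i j).
Proof. by apply/matrixP => i j; rewrite !mxE gmx_entry_mk. Qed.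

Lemma gmxC_nil m n : gmxC m n [::] = 0.
Proof. by apply/matrixP => i j; rewrite !mxE /gmx_entry /= !nth_nil. Qed.

Lemma gmxC_zero m n : gmxC m n (gmx_zero m n) = 0.
Proof. by apply/matrixP => i j; rewrite gmxC_mk !mxE. Qed.

Lemma gmxC_add m n A B : gmxC m n (gmx_add m n A B) = gmxC m n A + gmxC m n B.
Proof. by apply/matrixP => i j; rewrite gmxC_mk !mxE gC_add. Qed.

Lemma gmxC_opp m n A : gmxC m n (gmx_opp m n A) = - gmxC m n A.
Proof. by apply/matrixP => i j; rewrite gmxC_mk !mxE gC_opp. Qed.

Lemma gmxC_scale m n z A : gmxC m n (gmx_scale m n z A) = gC z *: gmxC m n A.
Proof. by apply/matrixP => i j; rewrite gmxC_mk !mxE gC_mul. Qed.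

Lemma gmxC_adj m n A : gmxC n m (gmx_adj m n A) = adjmx (gmxC m n A).
Proof. by apply/matrixP => i j; rewrite gmxC_mk !mxE gC_conj. Qed.

Lemma gmxC_mul m n p A B :
  gmxC m p (gmx_mul m n p A B) = gmxC m n A *m gmxC n p B.
Proof.
apply/matrixP => i j; rewrite gmxC_mk !mxE gC_sum.
by apply: eq_bigr => k _; rewrite gC_mul !mxE.
Qed.

Lemma gmxC_bracket n A B : gmxC n n (gmx_bracket n A B) =
  gmxC n n A *m gmxC n n B - gmxC n n B *m gmxC n n A.
Proof. by rewrite gmxC_add gmxC_opp !gmxC_mul. Qed.

Lemma gmxC_tens m1 n1 m2 n2 A B :
  gmxC (m1 * m2) (n1 * n2) (gmx_tens m1 n1 m2 n2 A B) = gmxC m1 n1 A *t gmxC m2 n2 B.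
Proof. by apply/matrixP => i j; rewrite gmxC_mk !mxE gC_mul. Qed.

Lemma gmxC_delta m n (a : 'I_m) (b : 'I_n) : gmxC m n (gmx_delta m n a b) = delta_mx a b.
Proof. by apply/matrixP => i j; rewrite gmxC_mk !mxE; case: (_ && _). Qed.

Lemma gmxC_diag n d :
  gmxC n n (gmx_diag n d) = diag_mx (\row_(i < n) gC (nth Z0 d i, Z0)).
Proof.
apply/matrixP => i j; rewrite gmxC_mk !mxE -val_eqE /=.
by case: eqP => [/val_inj ->|]; rewrite ?mulr1n ?mulr0n.
Qed.

End Embedding.

Section Encoding.
Variable R : realType.
Local Notation C := R[i].
Local Notation gmxC := (@gmxC R).

Lemma I3_gmxC : I3 R = gmxC 3 3 gI3.
Proof.
rewrite /I3 gmxC_diag -diag_const_mx; congr diag_mx.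
by apply/rowP => i; rewrite !mxE; case: i => [[|[|[|]]]].
Qed.

Lemma E3_gmxC : E3 R = gmxC 3 3 gE3.
Proof.
rewrite /E3 gmxC_diag; congr diag_mx.
apply/rowP => i; rewrite !mxE; case: i => [[|[|[|]]]] //= _.
by rewrite -[(_, _)]/(gi_opp gi1) gC_opp gC1.
Qed.

Lemma gmxC_tens3 A B D :
  gmxC 27 27 (gmx_tens3 A B D) = gmxC 3 3 A *t gmxC 3 3 B *t gmxC 3 3 D.
Proof. by rewrite (gmxC_tens _ 9 9 3 3) (gmxC_tens _ 3 3 3 3). Qed.

Lemma loc_sum_gmxC L : loc_sum (gmxC 3 3 L) = gmxC 27 27 (gloc L).
Proof. by rewrite /gloc !gmxC_add !gmxC_tens3 -I3_gmxC. Qed.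

Lemma Hint_gmxC : Hint R = gmxC 27 27 gH.
Proof. by rewrite /gH !gmxC_add !gmxC_tens3 -I3_gmxC -E3_gmxC. Qed.

Lemma k_gmxC a b c : (a < 3)%N -> (b < 3)%N -> (c < 3)%N ->
  k R a b c = gmxC 27 1 (gket a b c).
Proof.
move=> lta ltb ltc; rewrite /k /ket /e3 (gmxC_tens _ 9 1 3 1) (gmxC_tens _ 3 1 3 1).
by rewrite -!(gmxC_delta R 3 1) !inordK.
Qed.

Lemma Vlist_gmxC : Vlist R = map (gmxC 27 1) gV.
Proof.
have two : 2 = gC R (gi_add gi1 gi1) by rewrite gC_add gC1.
by rewrite /Vlist !k_gmxC // two -!gmxC_scale -!gmxC_opp -!gmxC_add.
Qed.

Lemma Vrows_gmxC : Vrows R = (gmxC 27 8 gW)^T.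
Proof.
apply/matrixP => i j; rewrite !mxE Vlist_gmxC (nth_map [::]) //.
by rewrite !mxE gmx_entry_mk.
Qed.

End Encoding.

Section Restriction.
Variable R : realType.
Local Notation C := R[i].
Local Notation gmxC := (@gmxC R).
Local Notation gC := (@gC R).
Local Notation W := (gmxC 27 8 gW).
Local Notation D := (gmxC 8 8 gD).

Lemma Lalg0 : Lalg (0 : 'M[C]_27).
Proof.
by rewrite -(scale0r ('i *: Hint R)); apply/lie_scale/lie_base; [exact: real0 | right].
Qed.

Definition restricted_L (M : 'M[C]_8) : Prop := exists2 Y, Lalg Y & Y *m W = W *m M.

Lemma restricted_L0 : restricted_L 0.
Proof. by exists 0; rewrite ?mul0mx ?mulmx0 //; exact: Lalg0. Qed.

Lemma restricted_LD M N : restricted_L M -> restricted_L N -> restricted_L (M + N).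
Proof.
move=> [Y LY YW] [Z LZ ZW]; exists (Y + Z); first exact: lie_add.
by rewrite mulmxDl mulmxDr YW ZW.
Qed.

Lemma restricted_LZ c M : c \is Num.real -> restricted_L M -> restricted_L (c *: M).
Proof.
move=> c_real [Y LY YW]; exists (c *: Y); first exact: lie_scale.
by rewrite -scalemxAl -scalemxAr YW.
Qed.

Lemma restricted_L_bracket M N : restricted_L M -> restricted_L N ->
  restricted_L (M *m N - N *m M).
Proof.
move=> [Y LY YW] [Z LZ ZW]; exists (Y *m Z - Z *m Y); first exact: lie_bracket.
by rewrite mulmxBl mulmxBr -!mulmxA YW ZW !mulmxA YW ZW.
Qed.

Lemma restricted_L_sum (I : Type) (r : seq I) (P : pred I) (F : I -> 'M[C]_8) :
  (forall i, P i -> restricted_L (F i)) -> restricted_L (\sum_(i <- r | P i) F i).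
Proof.
by move=> LF; apply: (big_ind restricted_L restricted_L0 restricted_LD).
Qed.

Lemma trace_gmxC3 L :
  \tr (gmxC 3 3 L) = gC (gi_sum [:: gmx_entry L 0 0; gmx_entry L 1 1; gmx_entry L 2 2]).
Proof. by rewrite /mxtrace !big_ord_recr big_ord0 /= !mxE !gC_add add0r addr0 addrA. Qed.

Lemma Loc_su3_basis L : L \in su3_basis -> Loc ('i *: gmxC 27 27 (gloc L)).
Proof.
move: su3_basis_checked => /allP/[apply]/andP[/eqP herm /eqP tr0].
by exists (gmxC 3 3 L); rewrite -gmxC_adj herm trace_gmxC3 tr0 loc_sum_gmxC.
Qed.

Lemma Lalg_ggens j : Lalg (gmxC 27 27 (nth [::] ggens j)).
Proof.
have i2E G :
    gmxC 27 27 (gmx_scale 27 27 gi_i2 G) = gC (gi_add gi1 gi1) *: ('i *: gmxC 27 27 G).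
  by rewrite gmxC_scale gC_imag scalerA.
have [ltj8 | ] := ltnP j 8.
  rewrite nth_rcons size_map ltj8 (nth_map [::]) // i2E.
  by apply/lie_scale/lie_base; [exact: gC_real | left; apply/Loc_su3_basis/mem_nth].
rewrite leq_eqVlt => /predU1P[<- | ltj9].
  rewrite nth_rcons size_map ltnn eqxx i2E -Hint_gmxC.
  by apply/lie_scale/lie_base; [exact: gC_real | right].
by rewrite nth_default ?size_rcons ?size_map // gmxC_nil; exact: Lalg0.
Qed.

Lemma restricted_L_grestr j :
  restricted_L (gmxC 8 8 (nth [::] (map grestr ggens) j)).
Proof.
have [ltj | lej] := ltnP j (size ggens); last first.
  by rewrite nth_default ?size_map // gmxC_nil; exact: restricted_L0.
exists (gmxC 27 27 (nth [::] ggens j)); first exact: Lalg_ggens.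
move: restrict_checked => /allP/(_ _ (mem_nth [::] ltj))/eqP/(congr1 (gmxC 27 8)).
by rewrite (nth_map [::]) // !gmxC_mul.
Qed.

Local Notation brackets := (map (gbracket_word (map grestr ggens)) words).

Lemma restricted_L_word g w : (forall i, restricted_L (gmxC 8 8 (nth [::] g i))) ->
  restricted_L (gmxC 8 8 (gbracket_word g w)).
Proof.
move=> Lg; elim: w => [|i [|j w] IH]; first by rewrite gmxC_nil; exact: restricted_L0.
  exact: Lg.
by rewrite [gbracket_word _ _]/= gmxC_bracket; apply: restricted_L_bracket.
Qed.

Lemma restricted_L_gcomb B l : (forall i, restricted_L (gmxC 8 8 (nth [::] B i))) ->
  restricted_L (gmxC 8 8 (gcomb B l)).
Proof.
move=> LB; elim: l => [|[c i] l IH]; first by rewrite gmxC_zero; exact: restricted_L0.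
rewrite [gcomb _ _]/= gmxC_add gmxC_scale.
by apply: restricted_LD => //; apply: restricted_LZ; [exact: gC_real | exact: LB].
Qed.

Lemma restricted_L_brackets i : restricted_L (gmxC 8 8 (nth [::] brackets i)).
Proof.
have [lti | lei] := ltnP i (size words); last first.
  by rewrite nth_default ?size_map // gmxC_nil; exact: restricted_L0.
by rewrite (nth_map [::]) //; apply: restricted_L_word; exact: restricted_L_grestr.
Qed.

Lemma gmxC_target_asym (a b : 'I_8) :
  gmxC 8 8 (gtarget_asym a b) = D *m (delta_mx a b - delta_mx b a).
Proof. by rewrite gmxC_mul gmxC_add gmxC_opp !gmxC_delta. Qed.

Lemma gmxC_target_sym (a b : 'I_8) :
  gmxC 8 8 (gtarget_sym a b) = D *m ('i *: (delta_mx a b + delta_mx b a)).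
Proof. by rewrite gmxC_mul gmxC_scale gmxC_add !gmxC_delta gC_imag gC1 mul1r. Qed.

Lemma restricted_L_scaled_gcomb l M :
  gmxC 8 8 (gcomb brackets l) = gC (coef_denom, Z0) *: M -> restricted_L M.
Proof.
have denom_neq0 : gC (coef_denom, Z0) != 0 by rewrite gC_eq0.
move=> combE; rewrite -[M]scale1r -(mulVf denom_neq0) -scalerA -combE.
apply: restricted_LZ; first by rewrite realV gC_real.
exact/restricted_L_gcomb/restricted_L_brackets.
Qed.

Lemma restricted_L_targets (a b : 'I_8) :
  restricted_L (D *m (delta_mx a b - delta_mx b a))
  /\ restricted_L (D *m ('i *: (delta_mx a b + delta_mx b a))).
Proof.
have lta := ltn_ord a; have ltb := ltn_ord b.
have ltab : (8 * a + b < 64)%N by lia.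
have [diva moda] : ((8 * a + b) %/ 8 = a /\ (8 * a + b) %% 8 = b)%N by lia.
move: span_checked => /allP/(_ (8 * a + b)%N); rewrite mem_iota diva moda => /(_ ltab).
case/andP => /eqP/(congr1 (gmxC 8 8)) asymE /eqP/(congr1 (gmxC 8 8)) symE.
rewrite gmxC_scale gmxC_target_asym in asymE; rewrite gmxC_scale gmxC_target_sym in symE.
by split; [exact: restricted_L_scaled_gcomb asymE | exact: restricted_L_scaled_gcomb symE].
Qed.

Lemma restricted_L_skew_hermitian x : adjmx x = - x -> restricted_L (D *m x).
Proof.
move=> /skew_hermitian_sum_delta ->; rewrite mulmx_sumr; apply: restricted_L_sum => a _.
rewrite mulmx_sumr; apply: restricted_L_sum => b _.
have [asymL symL] := restricted_L_targets a b.
by rewrite mulmxDr; apply: restricted_LD; rewrite -scalemxAr;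
  apply: restricted_LZ; rewrite ?complex_real.
Qed.

Local Notation c := (gC (gram_scale, Z0)).

Lemma inV_colspan v : inV v -> exists u, v = W *m u.
Proof.
rewrite /inV Vrows_gmxC => /submxP[u uE].
by exists u^T; rewrite -[v]trmxK uE trmx_mul trmxK.
Qed.

Lemma inV_col_W j : inV (col j W).
Proof. by rewrite /inV Vrows_gmxC tr_col row_sub. Qed.

Lemma gram_W : D *m (adjmx W *m W) = c%:M.
Proof.
rewrite -gmxC_adj -!gmxC_mul (eqP gram_checked) gmxC_diag -diag_const_mx.
by congr diag_mx; apply/rowP => i; rewrite !mxE nth_nseq ltn_ord.
Qed.

Lemma proj_V n (A : 'M[C]_(27, n)) : (forall j, inV (col j A)) ->
  W *m D *m adjmx W *m A = c *: A.
Proof.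
move=> colA; apply/trmx_inj/row_matrixP => j; rewrite -!tr_col; congr trmx.
have [u uE] := inV_colspan _ (colA j).
rewrite !colE -!mulmxA -colE uE (mulmxA (adjmx W)) (mulmxA D) gram_W mul_scalar_mx.
by rewrite -scalemxAl -colE uE scalemxAr.
Qed.

End Restriction.

Theorem proposition6p3 (R : realType) (X : 'M[R[i]]_27) :
  adjmx X = - X -> \tr X = 0 ->
  (forall v, inV v -> inV (X *m v)) ->
  (forall w, orthV w -> X *m w = 0) ->
  exists Y, Lalg Y /\ (forall v, inV v -> Y *m v = X *m v).
Proof.
(* The restrictions exhaust u(8). *)
move=> skewX _ XV _.
set W := gmxC R 27 8 gW; set c := gC R (gram_scale, Z0).
have c_neq0 : c != 0 by rewrite gC_eq0.
set M := c^-1 *: (gmxC R 8 8 gD *m (adjmx W *m X *m W)).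
have XW : X *m W = W *m M.
  rewrite -scalemxAr !mulmxA -(mulmxA _ X) proj_V ?scalerA ?mulVf ?scale1r // => j.
  by rewrite colE -mulmxA -colE; apply/XV/inV_col_W.
have [Y LY YW] : restricted_L R M.
  apply/restricted_LZ/restricted_L_skew_hermitian; first by rewrite realV gC_real.
  by rewrite !adjmx_mul adjmxK skewX mulNmx mulmxN mulmxA.
by exists Y; split=> // v /inV_colspan[u ->]; rewrite !mulmxA YW XW.
Qed.
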